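(* Let $\mathcal{X},\mathcal{Y}$ be finite, $m\ge1$, $Q$ a distribution on $\mathcal{X}$ with $Q(x)>0$ for all $x$, and $\mathbf x\in\mathcal{X}^m,\mathbf y\in\mathcal{Y}^m$. With $\tilde W(y|x)=\hat P_{\mathbf x,\mathbf y}(x,y)/Q(x)$, $$\tilde I(Q,\tilde W)=\frac1m\log_2\frac{\hat p(\mathbf x|\mathbf y)}{Q(\mathbf x)}.$$ Moreover, for every real $T$ and every $\mathbf y\in\mathcal{Y}^m$, if $\mathbf X=(X_1,\dots,X_m)$ is i.i.d. with law $Q$, then $$\Pr\left(\frac{\hat p(\mathbf X|\mathbf y)}{Q(\mathbf X)}\ge2^{mT}\right)\le2^{-(mT-k_0\log_2m-k_1)},\qquad k_0=k_1=(|\mathcal{X}|-1)|\mathcal{Y}|.$$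
   Context: $\hat P_{\mathbf x,\mathbf y}(x,y)=\frac1m\sum_{i=1}^m\mathbf 1(x_i=x,y_i=y)$ is the joint empirical distribution, $\hat P_{\mathbf y}(y)$ the empirical distribution of $\mathbf y$, and $\hat P_{\mathbf x|\mathbf y}(x|y)=\hat P_{\mathbf x,\mathbf y}(x,y)/\hat P_{\mathbf y}(y)$. The conditional empirical probability is $\hat p(\mathbf x|\mathbf y)=\prod_{i=1}^m\hat P_{\mathbf x|\mathbf y}(x_i|y_i)$, and $Q(\mathbf x)=\prod_{i=1}^mQ(x_i)$. The false mutual information of a non-negative function $\tilde W(y|x)$ is $\tilde I(Q,\tilde W)=\sum_{x,y}Q(x)\tilde W(y|x)\log_2\frac{\tilde W(y|x)}{\sum_{x'}Q(x')\tilde W(y|x')}$ with $0\log0=0$. *)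

From mathcomp Require Import all_boot.
From Stdlib Require Import Reals.
Set Implicit Arguments. Unset Strict Implicit. Unset Printing Implicit Defensive.
Open Scope R_scope.

Definition log2 (x : R) : R := ln x / ln 2.

Section Defs.
Variables (X Y : finType) (m : nat).

Definition Pxy (xs : {ffun 'I_m -> X}) (ys : {ffun 'I_m -> Y}) (x : X) (y : Y) : R :=
  INR #|[set i : 'I_m | (xs i == x) && (ys i == y)]| / INR m.

Definition Py (ys : {ffun 'I_m -> Y}) (y : Y) : R :=
  INR #|[set i : 'I_m | ys i == y]| / INR m.

Definition Px_given_y (xs : {ffun 'I_m -> X}) (ys : {ffun 'I_m -> Y}) (x : X) (y : Y) : R :=
  Pxy xs ys x y / Py ys y.

Definition phat (xs : {ffun 'I_m -> X}) (ys : {ffun 'I_m -> Y}) : R :=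
  \big[Rmult/1]_(i < m) Px_given_y xs ys (xs i) (ys i).

Definition Qprod (Q : X -> R) (xs : {ffun 'I_m -> X}) : R :=
  \big[Rmult/1]_(i < m) Q (xs i).

Definition PrQ (Q : X -> R) (P : {ffun 'I_m -> X} -> Prop)
    (Pdec : forall xs, {P xs} + {~ P xs}) : R :=
  \big[Rplus/0]_(xs : {ffun 'I_m -> X}) (if Pdec xs then Qprod Q xs else 0).

End Defs.
Arguments PrQ {X m} Q P Pdec.

Definition falseMI (X Y : finType) (Q : X -> R) (W : Y -> X -> R) : R :=
  \big[Rplus/0]_(x : X) \big[Rplus/0]_(y : Y)
    (if Req_EM_T (Q x * W y x) 0 then 0
     else Q x * W y x *
          log2 (W y x / \big[Rplus/0]_(x' : X) (Q x' * W y x'))).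

(* Grouping the positions of (xs, ys) by their joint letter turns the logarithm of
   the product phat xs ys / Qprod Q xs into m times the false mutual information of
   the joint type.  For the tail bound, Markov's inequality reduces it to bounding
   the sum of phat xs ys over all xs.  On a conditional type class phat xs ys is the
   product measure of one fixed stochastic matrix, so the class contributes at most
   1; and a conditional type is determined by the counts N(x, y) for x different
   from one fixed letter, giving at most (m+1)^((|X|-1)|Y|) <= (2m)^k0 classes. *)
From HB Require Import structures.
From mathcomp Require Import all_boot.
From Stdlib Require Import Reals Lra.
Open Scope R_scope.
Set Implicit Arguments. Unset Strict Implicit.

Lemma RplusA : associative Rplus. Proof. by move=> *; ring. Qed.
Lemma RmultA : associative Rmult. Proof. by move=> *; ring. Qed.
HB.instance Definition _ := Monoid.isComLaw.Build R 0 Rplus RplusA Rplus_comm Rplus_0_l.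
HB.instance Definition _ := Monoid.isComLaw.Build R 1 Rmult RmultA Rmult_comm Rmult_1_l.
HB.instance Definition _ := Monoid.isMulLaw.Build R 0 Rmult Rmult_0_l Rmult_0_r.
HB.instance Definition _ :=
  Monoid.isAddLaw.Build R Rmult Rplus Rmult_plus_distr_r Rmult_plus_distr_l.

Lemma Rsum_le (I : Type) (r : seq I) (P : pred I) (F G : I -> R) :
  (forall i, P i -> F i <= G i) ->
  \big[Rplus/0]_(i <- r | P i) F i <= \big[Rplus/0]_(i <- r | P i) G i.
Proof. by move=> FG; apply: (big_ind2 (fun a b => a <= b)) => // *; lra. Qed.

Lemma Rprod_ge0 (I : Type) (r : seq I) (P : pred I) (F : I -> R) :
  (forall i, P i -> 0 <= F i) -> 0 <= \big[Rmult/1]_(i <- r | P i) F i.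
Proof. by move=> F0; apply: (big_ind (fun a => 0 <= a)) => // *; nra. Qed.

Lemma Rprod_gt0 (I : Type) (r : seq I) (P : pred I) (F : I -> R) :
  (forall i, P i -> 0 < F i) -> 0 < \big[Rmult/1]_(i <- r | P i) F i.
Proof. by move=> F0; apply: (big_ind (fun a => 0 < a)) => // *; nra. Qed.

Lemma INR_sum (I : Type) (r : seq I) (P : pred I) (F : I -> nat) :
  INR (\sum_(i <- r | P i) F i) = \big[Rplus/0]_(i <- r | P i) INR (F i).
Proof. exact: (big_morph INR plus_INR). Qed.

Lemma ln_prod (I : Type) (r : seq I) (F : I -> R) : (forall i, 0 < F i) ->
  ln (\big[Rmult/1]_(i <- r) F i) = \big[Rplus/0]_(i <- r) ln (F i).
Proof.
move=> F0; elim: r => [|a s IH]; first by rewrite !big_nil ln_1.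
by rewrite !big_cons ln_mult ?IH //; apply: Rprod_gt0.
Qed.

Lemma Rprod_div (I : Type) (r : seq I) (F G : I -> R) : (forall i, 0 < G i) ->
  \big[Rmult/1]_(i <- r) (F i / G i)
  = \big[Rmult/1]_(i <- r) F i / \big[Rmult/1]_(i <- r) G i.
Proof.
move=> G0; elim: r => [|a s IH]; first by rewrite !big_nil; field.
have := G0 a; have := @Rprod_gt0 _ s xpredT _ (fun i _ => G0 i).
by rewrite !big_cons IH => *; field; lra.
Qed.

Lemma Rsum_const (T : finType) (P : pred T) (c : R) :
  \big[Rplus/0]_(i | P i) c = INR #|P| * c.
Proof.
rewrite big_const_seq -size_filter -cardE /=.
by elim: #|P| => [|n IH]; [rewrite /=; lra | rewrite iterS S_INR IH; lra].
Qed.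

Lemma INR_expn (a b : nat) : INR (expn a b) = INR a ^ b.
Proof. by elim: b => [|b IH]; rewrite ?expn0 // expnS mult_INR IH. Qed.

Lemma Rdiv_ge0 (a b : R) : 0 <= a -> 0 <= b -> 0 <= a / b.
Proof.
move=> a0 [b0|<-]; last by rewrite /Rdiv Rinv_0; lra.
by apply: Rmult_le_pos => //; left; apply: Rinv_0_lt_compat.
Qed.

Section EmpiricalDistributions.
Variables (X Y : finType) (m : nat).
Implicit Types (xs : {ffun 'I_m -> X}) (ys : {ffun 'I_m -> Y}).

Definition Nxy xs ys x y := #|[set i : 'I_m | (xs i == x) && (ys i == y)]|.
Definition Ny ys y := #|[set i : 'I_m | ys i == y]|.

Lemma sum_Nxy xs ys y : (\sum_(x : X) Nxy xs ys x y)%nat = Ny ys y.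
Proof.
rewrite /Ny -sum1_card (partition_big xs predT) //=; apply: eq_bigr => x _.
rewrite /Nxy -sum1_card; apply: eq_bigl => i; rewrite !inE andbC.
by case: (ys i == y); case: (xs i == x).
Qed.

Lemma Nxy_le xs ys x y : (Nxy xs ys x y <= m)%nat.
Proof. by rewrite (leq_trans (max_card _)) ?card_ord. Qed.

Lemma sum_Pxy xs ys y : \big[Rplus/0]_(x : X) Pxy xs ys x y = Py ys y.
Proof.
by rewrite -[Py _ _]/(INR (Ny ys y) / INR m) -(sum_Nxy xs) INR_sum /Rdiv big_distrl.
Qed.

Lemma sum_by_joint_letter xs ys (g : X -> Y -> R) :
  \big[Rplus/0]_(i < m) g (xs i) (ys i)
  = \big[Rplus/0]_(x : X) \big[Rplus/0]_(y : Y) (INR (Nxy xs ys x y) * g x y).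
Proof.
rewrite pair_bigA (partition_big (fun i => (xs i, ys i)) xpredT) //=.
apply: eq_bigr => [[x y]] _ /=.
rewrite (eq_bigr (fun=> g x y)) => [|i /eqP[-> ->] //].
by rewrite Rsum_const /Nxy cardsE.
Qed.

Lemma Pxy_ge0 xs ys x y : 0 <= Pxy xs ys x y.
Proof. by apply: Rdiv_ge0; apply: pos_INR. Qed.

Lemma Px_given_y_ge0 xs ys x y : 0 <= Px_given_y xs ys x y.
Proof. by apply: Rdiv_ge0; [apply: Pxy_ge0 | apply: Rdiv_ge0; apply: pos_INR]. Qed.

Hypothesis m_gt0 : (0 < m)%nat.

Lemma INR_m_gt0 : 0 < INR m.
Proof. by apply: lt_0_INR; apply/ltP. Qed.

Lemma INR_card_gt0_div_m (A : {set 'I_m}) (i : 'I_m) :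
  i \in A -> 0 < INR #|A| / INR m.
Proof.
move=> Ai; apply: Rdiv_lt_0_compat; last exact: INR_m_gt0.
by apply: lt_0_INR; apply/ltP/card_gt0P; exists i.
Qed.

Lemma Py_gt0 ys i : 0 < Py ys (ys i).
Proof. by apply: (@INR_card_gt0_div_m _ i); rewrite inE. Qed.

Lemma Px_given_y_gt0 xs ys i : 0 < Px_given_y xs ys (xs i) (ys i).
Proof.
apply: Rdiv_lt_0_compat; last exact: Py_gt0.
by apply: (@INR_card_gt0_div_m _ i); rewrite inE !eqxx.
Qed.

End EmpiricalDistributions.

Lemma log2_prod (I : Type) (r : seq I) (F : I -> R) : (forall i, 0 < F i) ->
  log2 (\big[Rmult/1]_(i <- r) F i) = \big[Rplus/0]_(i <- r) log2 (F i).
Proof. by move=> F0; rewrite /log2 ln_prod // /Rdiv big_distrl. Qed.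

Lemma log2_phat_div_Qprod (X Y : finType) (m : nat) (Q : X -> R)
    (xs : {ffun 'I_m -> X}) (ys : {ffun 'I_m -> Y}) :
  (0 < m)%nat -> (forall x, 0 < Q x) ->
  log2 (phat xs ys / Qprod Q xs)
  = \big[Rplus/0]_(x : X) \big[Rplus/0]_(y : Y)
      (INR (Nxy xs ys x y) * log2 (Px_given_y xs ys x y / Q x)).
Proof.
move=> m_gt0 Q_gt0; rewrite /phat /Qprod -Rprod_div // log2_prod.
  exact: (sum_by_joint_letter xs ys (fun x y => log2 (Px_given_y xs ys x y / Q x))).
by move=> i; apply: Rdiv_lt_0_compat; [apply: Px_given_y_gt0 | apply: Q_gt0].
Qed.

Lemma falseMI_empirical (X Y : finType) (m : nat) (Q : X -> R)
    (xs : {ffun 'I_m -> X}) (ys : {ffun 'I_m -> Y}) :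
  (0 < m)%nat -> (forall x, 0 < Q x) ->
  falseMI Q (fun y x => Pxy xs ys x y / Q x)
  = / INR m * log2 (phat xs ys / Qprod Q xs).
Proof.
move=> m_gt0 Q_gt0; have m0 := INR_m_gt0 m_gt0.
have QPxy x y : Q x * (Pxy xs ys x y / Q x) = Pxy xs ys x y.
  by field; have := Q_gt0 x; lra.
rewrite log2_phat_div_Qprod // big_distrr; apply: eq_bigr => x _.
rewrite big_distrr; apply: eq_bigr => y _ /=.
under eq_bigr do rewrite QPxy.
rewrite QPxy sum_Pxy.
have -> : / INR m * (INR (Nxy xs ys x y) * log2 (Px_given_y xs ys x y / Q x))
          = Pxy xs ys x y * log2 (Px_given_y xs ys x y / Q x).
  by rewrite /Pxy /Nxy; field; lra.
case: Req_EM_T => [Pxy0|Pxy_neq0] /=; first by rewrite Pxy0; ring.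
by rewrite /Px_given_y /Rdiv Rmult_assoc (Rmult_comm (/ Q x)) -Rmult_assoc.
Qed.

Section ConditionalTypes.
Variables (X Y : finType) (m : nat).
Hypothesis m_gt0 : (0 < m)%nat.
Implicit Types (xs r : {ffun 'I_m -> X}) (ys : {ffun 'I_m -> Y}).

Lemma sum_prod_Px_given_y r ys :
  \big[Rplus/0]_(xs : {ffun 'I_m -> X})
     \big[Rmult/1]_(i < m) Px_given_y r ys (xs i) (ys i) = 1.
Proof.
rewrite -(bigA_distr_bigA (fun i x => Px_given_y r ys x (ys i))) /=.
apply: big1 => i _; rewrite /Px_given_y /Rdiv -big_distrl /= sum_Pxy.
by apply: Rinv_r; have := Py_gt0 m_gt0 ys i; lra.
Qed.

(* Only the counts of the letters x <> x0 are recorded: the row of x0 is then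
   forced by Ny, which is why the exponent is (|X| - 1) |Y|. *)
Definition cond_type (x0 : X) ys xs : {ffun {x : X | x != x0} * Y -> 'I_m.+1} :=
  [ffun p => inord (Nxy xs ys (val p.1) p.2)].

Lemma Nxy_eq_of_cond_type x0 ys xs xs' :
  cond_type x0 ys xs = cond_type x0 ys xs' ->
  forall x y, Nxy xs ys x y = Nxy xs' ys x y.
Proof.
move=> same_type.
have Nxy_eq x y : x != x0 -> Nxy xs ys x y = Nxy xs' ys x y.
  move=> x_neq_x0.
  have := congr1 (fun c : {ffun {x : X | x != x0} * Y -> 'I_m.+1} =>
                    val (c (exist _ x x_neq_x0, y))) same_type.
  by rewrite !ffunE /= !inordK // ltnS Nxy_le.
move=> x y; have [->|] := eqVneq x x0; last exact: Nxy_eq.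
have sumN := sum_Nxy xs ys y; have sumN' := sum_Nxy xs' ys y.
rewrite (bigD1 x0) //= in sumN; rewrite (bigD1 x0) //= in sumN'.
rewrite (eq_bigr (fun z => Nxy xs' ys z y)) in sumN; last by move=> z; apply: Nxy_eq.
by apply/eqP; rewrite -(eqn_add2r (\sum_(x | x != x0) Nxy xs' ys x y)) sumN sumN'.
Qed.

Lemma card_cond_types (x0 : X) :
  #|{ffun {x : X | x != x0} * Y -> 'I_m.+1}| = expn m.+1 ((#|X| - 1) * #|Y|).
Proof. by rewrite card_ffun card_prod card_sig cardC1 card_ord subn1. Qed.

Lemma phat_eq_of_cond_type x0 ys xs r :
  cond_type x0 ys xs = cond_type x0 ys r ->
  phat xs ys = \big[Rmult/1]_(i < m) Px_given_y r ys (xs i) (ys i).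
Proof.
move=> same_type; apply: eq_bigr => i _.
rewrite /Px_given_y /Pxy -/(Nxy _ _ _ _) -/(Nxy r _ _ _).
by rewrite (Nxy_eq_of_cond_type same_type).
Qed.

Lemma sum_phat_le ys :
  \big[Rplus/0]_(xs : {ffun 'I_m -> X}) phat xs ys
  <= INR m.+1 ^ ((#|X| - 1) * #|Y|).
Proof.
have [x0 _|X0] := pickP (@predT X); last first.
  rewrite big1 => [|xs _]; first by apply: pow_le; apply: pos_INR.
  by have := X0 (xs (Ordinal m_gt0)).
rewrite (partition_big (cond_type x0 ys) xpredT) //.
apply: (Rle_trans _ (\big[Rplus/0]_(c : {ffun {x : X | x != x0} * Y -> 'I_m.+1}) 1)).
  apply: Rsum_le => c _.
  have [r /eqP r_type|no_xs] := pickP (fun xs => cond_type x0 ys xs == c); last first.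
    by rewrite big_pred0 => [|xs]; [lra | exact: no_xs].
  rewrite -(sum_prod_Px_given_y r ys) big_mkcond; apply: Rsum_le => xs _.
  case: eqP => [xs_type|_]; last by apply: Rprod_ge0 => i _; apply: Px_given_y_ge0.
  have same_type : cond_type x0 ys xs = cond_type x0 ys r by rewrite xs_type r_type.
  by rewrite (phat_eq_of_cond_type same_type); apply: Rle_refl.
by rewrite Rsum_const Rmult_1_r -INR_expn -(card_cond_types x0); apply: Rle_refl.
Qed.

End ConditionalTypes.

Lemma PrQ_ratio_ge_le (X : finType) (m : nat) (Q : X -> R)
    (f : {ffun 'I_m -> X} -> R) (A : R) :
  (forall x, 0 < Q x) -> 0 < A -> (forall xs, 0 <= f xs) ->
  PrQ Q (fun xs => A <= f xs / Qprod Q xs)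
        (fun xs => Rle_dec A (f xs / Qprod Q xs))
  <= / A * \big[Rplus/0]_(xs : {ffun 'I_m -> X}) f xs.
Proof.
move=> Q_gt0 A_gt0 f_ge0; rewrite /PrQ big_distrr; apply: Rsum_le => xs _.
have Qxs_gt0 : 0 < Qprod Q xs by apply: Rprod_gt0.
have invA_gt0 := Rinv_0_lt_compat _ A_gt0.
case: Rle_dec => [A_le|not_A_le]; last by apply: Rmult_le_pos; [lra | apply: f_ge0].
apply: (Rmult_le_reg_l A) => //; rewrite -Rmult_assoc Rinv_r ?Rmult_1_l; last lra.
have := Rmult_le_compat_r _ _ _ (Rlt_le _ _ Qxs_gt0) A_le.
by rewrite /Rdiv Rmult_assoc Rinv_l ?Rmult_1_r; lra.
Qed.

Lemma Rpower2_tail_exponent (t : R) (m k : nat) : (0 < m)%nat ->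
  Rpower 2 (- (t - INR k * log2 (INR m) - INR k)) = / Rpower 2 t * (2 * INR m) ^ k.
Proof.
move=> m_gt0; have m0 := INR_m_gt0 m_gt0.
have ln2_gt0 : 0 < ln 2 by rewrite -ln_1; apply: ln_increasing; lra.
have pow2_log2 : Rpower 2 (log2 (INR m)) = INR m.
  by rewrite /Rpower /log2 /Rdiv Rmult_assoc Rinv_l ?Rmult_1_r ?exp_ln //; lra.
have -> : - (t - INR k * log2 (INR m) - INR k) = - t + (log2 (INR m) * INR k + INR k).
  by ring.
rewrite !Rpower_plus Rpower_Ropp -Rpower_mult pow2_log2 !Rpower_pow ?Rpow_mult_distr; lra.
Qed.

Theorem lemma7 (X Y : finType) (m : nat) (Q : X -> R)
  (Hm : (0 < m)%nat)
  (HQpos : forall x, 0 < Q x)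
  (HQsum : \big[Rplus/0]_(x : X) Q x = 1) :
  (forall (xs : {ffun 'I_m -> X}) (ys : {ffun 'I_m -> Y}),
     falseMI Q (fun y x => Pxy xs ys x y / Q x)
     = / INR m * log2 (phat xs ys / Qprod Q xs))
  /\
  (forall (T : R) (ys : {ffun 'I_m -> Y}),
     let k0 := INR ((#|X| - 1) * #|Y|)%nat in
     let k1 := INR ((#|X| - 1) * #|Y|)%nat in
     PrQ Q (fun xs => Rpower 2 (INR m * T) <= phat xs ys / Qprod Q xs)
           (fun xs => Rle_dec (Rpower 2 (INR m * T)) (phat xs ys / Qprod Q xs))
     <= Rpower 2 (- (INR m * T - k0 * log2 (INR m) - k1))).
Proof.
split=> [xs ys|T ys k0 k1]; first exact: falseMI_empirical.
have A_gt0 : 0 < Rpower 2 (INR m * T) by apply: exp_pos.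
rewrite /k0 /k1 Rpower2_tail_exponent //.
have phat_ge0 (xs : {ffun 'I_m -> X}) : 0 <= phat xs ys.
  by apply: Rprod_ge0 => i _; apply: Px_given_y_ge0.
apply: (Rle_trans _ _ _ (PrQ_ratio_ge_le HQpos A_gt0 phat_ge0)).
apply: Rmult_le_compat_l; first by left; apply: Rinv_0_lt_compat.
apply: (Rle_trans _ _ _ (sum_phat_le X Hm ys)); apply: pow_incr.
have m_ge1 : 1 <= INR m by apply: (le_INR 1); apply/leP.
by rewrite S_INR; lra.
Qed.
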